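(* For every type $\lambda$ of degree $d$, $$H_\lambda=\sum_{\tau}a(\tau,\lambda)\,M_\tau,\qquad E^+_\lambda=\sum_\tau e(\tau,\lambda)\,M_\tau,$$ the sums over all types $\tau$ of degree $d$, where $a(\tau,\lambda)$ is the number of arrangements of $\tau$ into $\lambda$ and $e(\tau,\lambda)$ the number of such arrangements with all entries in $\{0,1\}$. Moreover $a(\tau,\lambda)=a(\lambda^t,\tau^t)$ and $e(\tau,\lambda)=e(\lambda^t,\tau^t)$, the equalities being realized by the bijection $A\mapsto A^T$ on arrangements.
   Context: Let $x_{ij}$ ($i,j\ge1$) be indeterminates with $x_{ij}$ of degree $i$. The ring $\mathrm{PS}_{\mathbb Z}$ of polysymmetric functions is the ring of formal sums of monomials in the $x_{ij}$ of bounded degree with integer coefficients that are invariant under all permutations of the index set $\mathbb N_{>0}^2$ preserving the first coordinate. A type of degree $d$ is a finite multiset of pairs $(b,m)$ of positive integers with $\sum bm=d$; its transpose $\tau^t$ replaces each $(b,m)$ by $(m,b)$. A monomial $x_{i_1j_1}^{m_1}\cdots x_{i_rj_r}^{m_r}$ with distinct variables and $m_k\ge1$ has type $\{(i_1,m_1),\dots,(i_r,m_r)\}$; $M_\tau$ is the sum of all monomials of type $\tau$. $H_d$ is the sum of all monomials of degree $d$ and $E^+_d$ the sum of all squarefree monomials of degree $d$; for a type $\lambda$, $H_\lambda=\prod_{(d,m)\in\lambda}H_d(x_{**}^m)$ and $E^+_\lambda=\prod_{(d,m)\in\lambda}E^+_d(x_{**}^m)$, where $f(x_{**}^m)$ means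 substituting $x_{ij}\mapsto x_{ij}^m$. For types $\tau=\{(b_1,m_1),\dots,(b_r,m_r)\}$ and $\lambda=\{(c_1,n_1),\dots,(c_s,n_s)\}$ (in fixed orderings), an arrangement of $\tau$ into $\lambda$ is an $r\times s$ non-negative integer matrix $A$ with $A\vec n=\vec m$ and $A^T\vec b=\vec c$. *)

From HB Require Import structures.
From mathcomp Require Import all_boot all_order all_algebra.
From mathcomp Require Import finmap multiset.
Set Implicit Arguments. Unset Strict Implicit. Unset Printing Implicit Defensive.
Import Order.TTheory GRing.Theory Num.Theory.

Local Open Scope fset_scope.
Local Open Scope mset_scope.

(* The pair (i,j) : nat * nat stands for the variable x_{ij}; only pairs   *)
(* with i,j >= 1 are genuine variables (see [valid]).  A monomial is a     *)
(* finite multiset of variables: the multiplicity of (i,j) is the exponent *)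
(* of x_{ij}.                                                              *)
Definition var := (nat * nat)%type.
Definition mon := {mset var}.

Definition valid (mu : mon) : bool :=
  all (fun x : var => (0 < x.1)%N && (0 < x.2)%N) (finsupp mu).

Definition mdeg (mu : mon) : nat := (\sum_(x <- enum_mset mu) x.1)%N.

Definition mtype (mu : mon) : {mset (nat * nat)} :=
  seq_mset [seq (x.1, mu x) | x <- finsupp mu].

(* Formal sums of monomials with integer coefficients: coefficient maps.   *)
Definition ser := mon -> int.

Definition submsets (mu : mon) : seq mon :=
  undup [seq seq_mset (mask (val t) (enum_mset mu))
        | t <- enum {: (size (enum_mset mu)).-tuple bool}].

Definition sermul (f g : ser) : ser :=
  fun mu => (\sum_(al <- submsets mu) f al * g (mu `\` al))%R.

Definition ser1 : ser := fun mu => ((mu == mset0 : nat)%:Z)%R.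

(* f(x_{**}^m): substitute x_{ij} |-> x_{ij}^m (m >= 1).  The coefficient *)
(* of mu is f(alpha) if mu = m*alpha, and 0 if some exponent of mu is not  *)
(* divisible by m.                                                         *)
Definition mdivn (m : nat) (mu : mon) : mon :=
  ([fsfun x in finsupp mu => (mu x %/ m)%N] : {mset var}).
Definition subst_pow (m : nat) (f : ser) : ser :=
  fun mu => if all (fun x => (m %| mu x)%N) (finsupp mu)
            then f (mdivn m mu) else 0%R.

Definition Hser (d : nat) : ser :=
  fun mu => ((valid mu && (mdeg mu == d) : nat)%:Z)%R.

Definition Eser (d : nat) : ser :=
  fun mu => ((valid mu && all (fun x => (mu x <= 1)%N) (finsupp mu)
                       && (mdeg mu == d) : nat)%:Z)%R.

Definition typ := {mset (nat * nat)}.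

Definition is_type (t : typ) : bool :=
  all (fun p : nat * nat => (0 < p.1)%N && (0 < p.2)%N) (enum_mset t).

Definition tdeg (t : typ) : nat := (\sum_(p <- enum_mset t) p.1 * p.2)%N.

Definition ttr (t : typ) : typ := seq_mset [seq (p.2, p.1) | p <- enum_mset t].

Definition Mser (t : typ) : ser :=
  fun mu => ((valid mu && (mtype mu == t) : nat)%:Z)%R.

Definition Hlam (l : typ) : ser :=
  \big[sermul/ser1]_(p <- enum_mset l) subst_pow p.2 (Hser p.1).
Definition Elam (l : typ) : ser :=
  \big[sermul/ser1]_(p <- enum_mset l) subst_pow p.2 (Eser p.1).

(* The finite list of all types of degree d.  Every type of degree d has   *)
(* all its pairs in [1,d]^2 and all multiplicities <= d, so it is the image *)
(* of some f : 'I_d * 'I_d -> 'I_d.+1 under [typ_of_ff].                   *)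
Definition typ_of_ff (d : nat) (f : {ffun 'I_d * 'I_d -> 'I_d.+1}) : typ :=
  seq_mset (flatten [seq nseq (f p) ((p.1 : nat).+1, (p.2 : nat).+1)
                    | p <- enum {: 'I_d * 'I_d}]).
Definition types_of_deg (d : nat) : seq typ :=
  undup [seq typ_of_ff f | f <- enum {: {ffun 'I_d * 'I_d -> 'I_d.+1}}
                         & tdeg (typ_of_ff f) == d].

Definition sum_types (d : nat) (c : typ -> nat) : ser :=
  fun mu => (\sum_(t <- types_of_deg d) (c t)%:Z * Mser t mu)%R.

(* Arrangements.  With tau = {(b_1,m_1),..,(b_r,m_r)} and                   *)
(* lambda = {(c_1,n_1),..,(c_s,n_s)} in fixed orderings (given by          *)
(* b m : 'I_r -> nat and c n : 'I_s -> nat), an arrangement of tau into    *)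
(* lambda is an r x s nat matrix A with A n = m and A^T b = c.              *)
Definition is_arr (r s : nat) (b m : 'I_r -> nat) (c n : 'I_s -> nat)
    (A : 'M[nat]_(r, s)) : bool :=
  [forall i, (\sum_(j < s) A i j * n j)%N == m i] &&
  [forall j, (\sum_(i < r) A i j * b i)%N == c j].

Definition is01 (r s : nat) (A : 'M[nat]_(r, s)) : bool :=
  [forall i, forall j, (A i j <= 1)%N].

Definition ordering_of (r : nat) (b m : 'I_r -> nat) (t : typ) : bool :=
  seq_mset [seq (b i, m i) | i <- enum 'I_r] == t.

Definition fst_at (t : typ) (i : 'I_(size (enum_mset t))) : nat :=
  (nth (0, 0)%N (enum_mset t) i).1.
Definition snd_at (t : typ) (i : 'I_(size (enum_mset t))) : nat :=
  (nth (0, 0)%N (enum_mset t) i).2.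

Arguments fst_at : clear implicits.
Arguments snd_at : clear implicits.

(* Entries of an arrangement satisfy A_ij <= A_ij n_j <= m_i <= sum_i m_i *)
(* (as n_j >= 1), so arrangements are counted among matrices with entries *)
(* in [0, sum_i m_i].                                                      *)
Definition arr_bound (t : typ) : nat := (\sum_(p <- enum_mset t) p.2)%N.

Definition num_arr (t l : typ) : nat :=
  #|[set A : 'M['I_(arr_bound t).+1]_(size (enum_mset t), size (enum_mset l))
     | is_arr (fst_at t) (snd_at t) (fst_at l) (snd_at l) (map_mx val A)]|.

Definition num_arr01 (t l : typ) : nat :=
  #|[set A : 'M['I_(arr_bound t).+1]_(size (enum_mset t), size (enum_mset l))
     | is_arr (fst_at t) (snd_at t) (fst_at l) (snd_at l) (map_mx val A)
       && is01 (map_mx val A)]|.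

(* Expanding the product, a monomial x^mu of prod_k H_{c_k}(x_**^{n_k}) arises
   from a choice, for every part (c_k, n_k) of lambda, of a monomial x^{alpha_k}
   of degree c_k such that mu = sum_k n_k alpha_k.  Index rows by the variables
   x_ij occurring in mu, with b = i and m = the exponent of x_ij: the exponent
   vectors alpha_k are then the columns of a matrix A, and the two conditions
   read A n = m and A^T b = c.  So the coefficient of x^mu is the number of
   arrangements of type(mu) into lambda, and for E^+ the alpha_k are squarefree,
   i.e. A has 0/1 entries.  These counts are invariant under reordering rows and
   columns, and A |-> A^T exchanges (tau, lambda) with (lambda^t, tau^t). *)

From HB Require Import structures.
From mathcomp Require Import all_boot all_order all_algebra.
From mathcomp Require Import finmap multiset fingroup perm.
Import Order.TTheory GRing.Theory Num.Theory.

Set Implicit Arguments.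
Unset Strict Implicit.
Unset Printing Implicit Defensive.

Lemma card_set_sum1 (T : finType) (P : pred T) :
  #|[set x | P x]| = (\sum_(x | P x) 1)%N.
Proof. by rewrite -sum1_card; apply: eq_bigl => x; rewrite inE. Qed.

Lemma forall2C (I J : finType) (P : I -> J -> bool) :
  [forall i, forall j, P i j] = [forall j, forall i, P i j].
Proof.
by apply/forallP/forallP => H x; apply/forallP => y; move/forallP: (H y); apply.
Qed.

Lemma forall_perm (I : finType) (p : {perm I}) (P : pred I) :
  [forall i, P (p i)] = [forall i, P i].
Proof.
apply/forallP/forallP => H x; last exact: H.
by have := H (p^-1 x)%g; rewrite permKV.
Qed.

Lemma forall_andb (I : finType) (P Q : pred I) :
  [forall i, P i && Q i] = [forall i, P i] && [forall i, Q i].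
Proof.
apply/forallP/andP => [H|[/forallP H1 /forallP H2] i]; last by rewrite H1 H2.
by split; apply/forallP => i; case/andP: (H i).
Qed.

Lemma forall_ord_recl n (P : pred 'I_n.+1) :
  [forall j, P j] = P ord0 && [forall j, P (lift ord0 j)].
Proof.
apply/forallP/andP => [H|[H0 /forallP H] j]; first by split => //; apply/forallP.
by case: (unliftP ord0 j) => [k ->|->].
Qed.

Lemma is_arr_trmx r s b m c n (A : 'M[nat]_(r, s)) :
  is_arr b m c n A = is_arr n c m b A^T.
Proof.
rewrite /is_arr andbC; congr andb; apply: eq_forallb => i; congr (_ == _);
  by apply: eq_bigr => j _; rewrite mxE.
Qed.

Lemma is01_trmx r s (A : 'M[nat]_(r, s)) : is01 A = is01 A^T.
Proof.
by rewrite /is01 forall2C; apply: eq_forallb => j; apply: eq_forallb => i; rewrite mxE.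
Qed.

(* Double counting of [sum_i sum_j b_i A_ij n_j]. *)
Lemma is_arr_weight r s b m c n (A : 'M[nat]_(r, s)) : is_arr b m c n A ->
  (\sum_i b i * m i = \sum_j c j * n j)%N.
Proof.
case/andP => /forallP Hrow /forallP Hcol.
transitivity (\sum_i \sum_j b i * (A i j * n j))%N.
  by apply: eq_bigr => i _; rewrite -(eqP (Hrow i)) big_distrr.
rewrite exchange_big /=; apply: eq_bigr => j _; rewrite -(eqP (Hcol j)) big_distrl.
by apply: eq_bigr => i _; rewrite mulnCA mulnA.
Qed.

Lemma is_arr_entry_le r s b m c n (A : 'M[nat]_(r, s)) : is_arr b m c n A ->
  (forall j, 0 < n j) -> forall i j, A i j <= m i.
Proof.
case/andP => /forallP Hrow _ n_gt0 i j; rewrite -(eqP (Hrow i)) (bigD1 j) //=.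
by apply: leq_trans (leq_addr _ _); rewrite leq_pmulr.
Qed.

Lemma map_nth_enum_ord (T U : Type) (s : seq T) x0 (f : T -> U) :
  [seq f (nth x0 s i) | i : 'I_(size s) <- enum 'I_(size s)] = map f s.
Proof.
transitivity [seq f (nth x0 s i) | i <- map val (enum 'I_(size s))].
  by rewrite -map_comp.
by rewrite val_enum_ord -[in RHS](mkseq_nth x0 s) /mkseq -map_comp.
Qed.

Lemma ordering_of_enum (t : typ) : ordering_of (fst_at t) (snd_at t) t.
Proof.
rewrite /ordering_of /fst_at /snd_at (map_nth_enum_ord _ _ (fun p => (p.1, p.2))).
by rewrite (eq_map (g := id)) ?map_id ?seq_mset_id // => -[].
Qed.

Lemma ordering_of_ttr s (c n : 'I_s -> nat) (l : typ) :
  ordering_of c n l -> ordering_of n c (ttr l).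
Proof.
move/eqP => <-; apply/eqP; rewrite /ttr; apply/eq_seq_msetP.
have := perm_map (fun p : nat * nat => (p.2, p.1))
  (perm_eq_seq_mset [seq (c i, n i) | i <- enum 'I_s]).
by rewrite perm_sym -map_comp.
Qed.

Lemma size_ordering_of r (b m : 'I_r -> nat) t : ordering_of b m t -> r = size (enum_mset t).
Proof.
move/eqP <-; rewrite (perm_size (perm_eq_seq_mset _)) size_map.
by rewrite size_enum_ord.
Qed.

Lemma ordering_of_perm r (b m b' m' : 'I_r -> nat) t :
  ordering_of b m t -> ordering_of b' m' t ->
  exists p : 'S_r, forall i, b i = b' (p i) /\ m i = m' (p i).
Proof.
move=> /eqP ord_bm /eqP ord_bm'.
have /tuple_permP [p Ep] : perm_eq [seq (b i, m i) | i <- enum 'I_r]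
                                   [tuple (b' i, m' i) | i < r].
  by apply/eq_seq_msetP; rewrite ord_bm ord_bm'.
exists p => i; have /eq_in_map Ei := Ep.
by have := Ei i (mem_enum _ _); rewrite tnth_mktuple => -[-> ->].
Qed.

(* [fst_at t] is convertible to [fst_nth (enum_mset t)], likewise [snd_at]. *)
Definition pnth (L : seq (nat * nat)) (j : 'I_(size L)) : nat * nat := nth (0, 0)%N L j.
Arguments pnth : clear implicits.
Definition fst_nth (L : seq (nat * nat)) (j : 'I_(size L)) : nat := (pnth L j).1.
Definition snd_nth (L : seq (nat * nat)) (j : 'I_(size L)) : nat := (pnth L j).2.
Arguments fst_nth : clear implicits.
Arguments snd_nth : clear implicits.

Section ArrangementCount.
Variables (q : pred nat) (K : nat).

(* Arrangements with entries in ['I_K] all satisfying [q]: [q = predT] gives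
   [num_arr], [q = (<= 1)] gives [num_arr01]. *)
Definition arr_card r s (b m : 'I_r -> nat) (c n : 'I_s -> nat) : nat :=
  #|[set A : 'M['I_K]_(r, s) |
      is_arr b m c n (map_mx val A) && [forall i, forall j, q (A i j)]]|.

Lemma arr_card_trmx r s (b m : 'I_r -> nat) (c n : 'I_s -> nat) :
  arr_card b m c n = arr_card n c m b.
Proof.
rewrite /arr_card !card_set_sum1 (reindex (@trmx _ s r)); last first.
  by exists (@trmx _ r s) => A _; rewrite trmxK.
apply: eq_bigl => A; rewrite is_arr_trmx map_trmx trmxK forall2C.
by congr andb; apply: eq_forallb => i; apply: eq_forallb => j; rewrite mxE.
Qed.

Lemma eq_arr_card r s (b m m' : 'I_r -> nat) (c n : 'I_s -> nat) :
  m =1 m' -> arr_card b m c n = arr_card b m' c n.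
Proof.
move=> eq_m; apply: eq_card => A; rewrite !inE /is_arr.
by congr (_ && _ && _); apply: eq_forallb => i; rewrite eq_m.
Qed.

Lemma arr_card_row_perm r s (p : 'S_r) (b m b' m' : 'I_r -> nat) (c n : 'I_s -> nat) :
  (forall i, b i = b' (p i) /\ m i = m' (p i)) ->
  arr_card b m c n = arr_card b' m' c n.
Proof.
move=> Ebm; rewrite /arr_card !card_set_sum1.
rewrite [RHS](reindex_inj (h := row_perm p^-1)); last first.
  move=> A B E; apply/matrixP => i j.
  by have := congr1 (fun M : 'M_(r, s) => M (p i) j) E; rewrite !mxE permK.
apply: eq_bigl => A; rewrite /is_arr.
rewrite -(forall_perm p (fun i => _ == m' i)).
rewrite -(forall_perm p (fun i => [forall j, q (row_perm _ A i j)])).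
congr (_ && _ && _).
- apply: eq_forallb => i; have [_ ->] := Ebm i; congr (_ == _).
  by apply: eq_bigr => j _; rewrite !mxE permK.
- apply: eq_forallb => j; congr (_ == _).
  rewrite [RHS](reindex_inj (@perm_inj _ p)).
  by apply: eq_bigr => i _; have [-> _] := Ebm i; rewrite !mxE permK.
- by apply: eq_forallb => i; apply: eq_forallb => j; rewrite !mxE permK.
Qed.

Lemma arr_card_ordering r r' s (b m : 'I_r -> nat) (b' m' : 'I_r' -> nat)
    (c n : 'I_s -> nat) t :
  ordering_of b m t -> ordering_of b' m' t ->
  arr_card b m c n = arr_card b' m' c n.
Proof.
move=> ord_bm ord_bm'.
have er : r' = r by rewrite (size_ordering_of ord_bm) (size_ordering_of ord_bm').
subst r'; have [p Ebm] := ordering_of_perm ord_bm ord_bm'.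
exact: arr_card_row_perm Ebm.
Qed.

Lemma arr_card_ordering_col r s s' (b m : 'I_r -> nat) (c n : 'I_s -> nat)
    (c' n' : 'I_s' -> nat) l :
  ordering_of c n l -> ordering_of c' n' l ->
  arr_card b m c n = arr_card b m c' n'.
Proof.
move=> ord_cn ord_cn'; rewrite arr_card_trmx [RHS]arr_card_trmx.
exact: arr_card_ordering (ordering_of_ttr ord_cn) (ordering_of_ttr ord_cn').
Qed.

Lemma arr_card_nil r (b v : 'I_r -> nat) (c n : 'I_0 -> nat) :
  arr_card b v c n = [forall i, v i == 0%N].
Proof.
rewrite /arr_card; have [v0|] := boolP [forall i, v i == 0%N].
  rewrite (_ : [set A | _] = setT) ?cardsT ?card_mx ?muln0 //.
  apply/setP => A; rewrite !inE /is_arr.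
  rewrite -andbA; apply/and3P; split; apply/forallP => i //.
  - by rewrite big_ord0 eq_sym (forallP v0).
  - by case: i.
  - by apply/forallP => -[].
move=> nv0; rewrite (_ : [set A | _] = set0) ?cards0 //; apply/setP => A.
rewrite !inE; apply: contraNF nv0 => /andP[/andP[/forallP Hrow _] _].
by apply/forallP => i; have := Hrow i; rewrite big_ord0 eq_sym.
Qed.

Section RowMx.
Variables (T : Type) (r k : nat) (a : 'M[T]_(r, 1)) (B : 'M[T]_(r, k)).

Lemma row_mx_ord0 i : row_mx a B i ord0 = a i ord0.
Proof. by rewrite (_ : ord0 = lshift k (ord0 : 'I_1)) ?row_mxEl //; apply: val_inj. Qed.

Lemma row_mx_lift0 i j : row_mx a B i (lift ord0 j) = B i j.
Proof. by rewrite (_ : lift ord0 j = rshift 1 j) ?row_mxEr //; apply: val_inj. Qed.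

End RowMx.

Lemma map_mxE (T U : Type) (f : T -> U) r s (A : 'M_(r, s)) i j :
  map_mx f A i j = f (A i j).
Proof. exact: mxE. Qed.

Lemma eqn_addl_sub (x y z : nat) : (x + y == z) = (x <= z) && (y == z - x).
Proof.
apply/eqP/andP => [<-|[h /eqP ->]]; last by rewrite subnKC.
by rewrite leq_addr addKn.
Qed.

Lemma is_arr_row_mx r (b v : 'I_r -> nat) p L (a : 'cV['I_K]_r)
    (B : 'M['I_K]_(r, size L)) :
  is_arr b v (fst_nth (p :: L)) (snd_nth (p :: L)) (map_mx val (row_mx a B)) &&
    [forall i, forall j, q (row_mx a B i j)] =
  [&& [forall i, a i ord0 * p.2 <= v i], \sum_i a i ord0 * b i == p.1,
      [forall i, q (a i ord0)],
      is_arr b (fun i => v i - a i ord0 * p.2) (fst_nth L) (snd_nth L) (map_mx val B)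
    & [forall i, forall j, q (B i j)]].
Proof.
rewrite /is_arr.
have -> : [forall i, \sum_(j < size (p :: L)) map_mx val (row_mx a B) i j
                       * snd_nth (p :: L) j == v i] =
    [forall i, a i ord0 * p.2 <= v i] &&
    [forall i, \sum_(j < size L) map_mx val B i j * snd_nth L j
                 == v i - a i ord0 * p.2].
  rewrite -forall_andb; apply: eq_forallb => i.
  rewrite big_ord_recl !map_mxE row_mx_ord0 eqn_addl_sub; congr (_ && (_ == _)).
  by apply: eq_bigr => j _; rewrite !map_mxE row_mx_lift0.
have -> : [forall j, \sum_(i < r) map_mx val (row_mx a B) i j * b i
                       == fst_nth (p :: L) j] =
    (\sum_i a i ord0 * b i == p.1) &&
    [forall j, \sum_(i < r) map_mx val B i j * b i == fst_nth L j].
  rewrite forall_ord_recl; congr andb.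
    by congr (_ == _); apply: eq_bigr => i _; rewrite !map_mxE row_mx_ord0.
  apply: eq_forallb => j; rewrite /fst_nth /pnth lift0 /=; congr (_ == _).
  by apply: eq_bigr => i _; rewrite !map_mxE row_mx_lift0.
have -> : [forall i, forall j, q (row_mx a B i j)] =
    [forall i, q (a i ord0)] && [forall i, forall j, q (B i j)].
  rewrite -forall_andb; apply: eq_forallb => i; rewrite forall_ord_recl row_mx_ord0.
  by congr andb; apply: eq_forallb => j; rewrite row_mx_lift0.
rewrite -!andbA; case: [forall i, _ <= v i]; case: (_ == p.1);
  by case: [forall i, q (a i ord0)]; rewrite /= ?andbF.
Qed.

Lemma arr_card_cons r (b v : 'I_r -> nat) p L :
  arr_card b v (fst_nth (p :: L)) (snd_nth (p :: L)) =
  (\sum_(a : 'cV['I_K]_r)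
     [&& [forall i, a i ord0 * p.2 <= v i], \sum_i a i ord0 * b i == p.1
       & [forall i, q (a i ord0)]]
     * arr_card b (fun i => v i - a i ord0 * p.2) (fst_nth L) (snd_nth L))%N.
Proof.
rewrite /arr_card card_set_sum1 big_mkcond /=.
rewrite (reindex (fun x : 'cV['I_K]_r * 'M['I_K]_(r, size L) => row_mx x.1 x.2)) /=;
  last first.
  exists (fun A : 'M['I_K]_(r, 1 + size L) => (lsubmx A, rsubmx A)) => [[a B]|A] _;
    by rewrite /= ?row_mxKl ?row_mxKr ?hsubmxK.
rewrite -(pair_bigA _ (fun (a : 'cV['I_K]_r) (B : 'M['I_K]_(r, size L)) =>
  if is_arr b v (fst_nth (p :: L)) (snd_nth (p :: L)) (map_mx val (row_mx a B))
     && [forall i, forall j, q (row_mx a B i j)] then 1%N else 0%N)) /=.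
apply: eq_bigr => a _; rewrite card_set_sum1 big_distrr [RHS]big_mkcond /=.
apply: eq_bigr => B _; rewrite is_arr_row_mx -!andbA.
by case: [forall i, _ <= v i]; case: (_ == p.1); case: [forall i, q (a i ord0)];
  rewrite /= ?mul0n ?muln1; case: ifP.
Qed.

End ArrangementCount.

Lemma arr_card_widen q K K' r s (b m : 'I_r -> nat) (c n : 'I_s -> nat) : K <= K' ->
  (forall A : 'M[nat]_(r, s), is_arr b m c n A -> forall i j, A i j <= K) ->
  arr_card q K.+1 b m c n = arr_card q K'.+1 b m c n.
Proof.
move=> leKK' bounded; rewrite /arr_card !card_set_sum1.
have leK1 : K.+1 <= K'.+1 by [].
rewrite [RHS](reindex (map_mx (widen_ord leK1))); last first.
  exists (map_mx (fun x : 'I_K'.+1 => (inord x : 'I_K.+1))).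
    move=> A _; apply/matrixP => i j; rewrite !mxE; apply/val_inj => /=.
    by rewrite inordK //= ltnS -ltnS.
  move=> A; rewrite inE => /andP[arrA _]; apply/matrixP => i j; rewrite !mxE.
  by apply/val_inj => /=; rewrite inordK // ltnS; have := bounded _ arrA i j; rewrite mxE.
apply: eq_bigl => A.
have -> : map_mx val (map_mx (widen_ord leK1) A) = map_mx val A.
  by apply/matrixP => i j; rewrite !mxE.
by congr andb; apply: eq_forallb => i; apply: eq_forallb => j; rewrite mxE.
Qed.

Local Open Scope fset_scope.
Local Open Scope mset_scope.

Lemma validP (mu : mon) :
  reflect (forall x, mu x != 0%N -> (0 < x.1) && (0 < x.2))%N (valid mu).
Proof.
by apply: (iffP allP) => H x; [rewrite -mem_finsupp; apply: H | rewrite mem_finsupp; apply: H].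
Qed.

Lemma big_uniq_widen (T : eqType) (s X : seq T) (F : T -> nat) : uniq s -> uniq X ->
  {subset s <= X} -> (forall x, x \in X -> x \notin s -> F x = 0%N) ->
  (\sum_(x <- s) F x = \sum_(x <- X) F x)%N.
Proof.
move=> us uX sX F0; rewrite [RHS](bigID (mem s)) /=.
rewrite [X in (_ + X)%N]big1_seq ?addn0; last by move=> x /andP[xs xX]; apply: F0.
rewrite -[\sum_(x <- X | x \in s) F x]big_filter; apply: perm_big.
apply: uniq_perm => //; first exact: filter_uniq.
by move=> x; rewrite mem_filter; case xs: (x \in s) => //=; rewrite sX.
Qed.

Definition mon_of (X : seq var) (w : 'I_(size X) -> nat) : mon :=
  seq_mset (flatten [seq nseq (w k) (pnth X k) | k <- enum 'I_(size X)]).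

Section MonOf.
Variables (X : seq var) (uX : uniq X).

Lemma mon_ofE (w : 'I_(size X) -> nat) x :
  mon_of w x = (\sum_(k < size X) w k * (pnth X k == x))%N.
Proof.
rewrite /mon_of mset_seqE count_flatten -map_comp sumn_map big_map -enumT big_enum /=.
by apply: eq_bigr => k _; rewrite count_nseq mulnC.
Qed.

Lemma pnth_inj : injective (pnth X).
Proof. by move=> i j /eqP; rewrite /pnth nth_uniq // => /eqP /val_inj. Qed.

Lemma mem_pnth k : pnth X k \in X.
Proof. exact: mem_nth. Qed.

Lemma pnthP x : x \in X -> exists k, x = pnth X k.
Proof. by move=> xX; exists (Ordinal (etrans (index_mem x X) xX)); rewrite /pnth nth_index. Qed.

Lemma mon_of_pnth (w : 'I_(size X) -> nat) k : mon_of w (pnth X k) = w k.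
Proof.
rewrite mon_ofE (bigD1 k) //= eqxx muln1 big1 ?addn0 // => j jk.
by rewrite (inj_eq pnth_inj) (negbTE jk) muln0.
Qed.

Lemma mon_of_notin (w : 'I_(size X) -> nat) x : x \notin X -> mon_of w x = 0%N.
Proof.
move=> xX; rewrite mon_ofE big1 // => k _.
case: eqP => [e|]; rewrite ?muln0 //.
by rewrite -e mem_pnth in xX.
Qed.

Lemma mdeg_pnth (mu : mon) : (forall x, mu x != 0%N -> x \in X) ->
  mdeg mu = (\sum_(k < size X) mu (pnth X k) * (pnth X k).1)%N.
Proof.
move=> supp_mu; rewrite /mdeg sum_mset (big_uniq_widen (X := X)) ?fset_uniq //.
- by rewrite (big_nth (0, 0)%N) big_mkord.
- by move=> x; rewrite mem_finsupp; apply: supp_mu.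
- by move=> x _; rewrite mem_finsupp negbK => /eqP ->.
Qed.

End MonOf.

Lemma mem_submsets (mu al : mon) : (al \in submsets mu) = (al `<=` mu).
Proof.
rewrite /submsets mem_undup; apply/mapP/idP.
  case=> t _ ->; apply/msubsetP => x; rewrite mset_seqE -count_mem_mset.
  exact/leq_count_subseq/mask_subseq.
move/msubsetP => sub.
have : forall x, (count_mem x (enum_mset al) <= count_mem x (enum_mset mu))%N.
  by move=> x; rewrite !count_mem_mset.
case/count_subseqP => s' /subseqP [m sm ->] pe.
exists (@Tuple _ _ m (introT eqP sm)); first by rewrite mem_enum.
by rewrite -[LHS]seq_mset_id; apply/eq_seq_msetP.
Qed.

Lemma mdivnE n (mu : mon) x : mdivn n mu x = (mu x %/ n)%N.
Proof.
rewrite /mdivn fsfun_fun; case: ifP => //; rewrite mem_finsupp => /negbT.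
by rewrite negbK => /eqP ->; rewrite div0n.
Qed.

Section IntSums.
Local Open Scope ring_scope.

Lemma big_seq_reindex (T : eqType) (I : finType) (s : seq T) (h : I -> T) (D : pred I)
    (f : T -> int) :
  uniq s -> {in D &, injective h} -> (forall i, D i -> h i \in s) ->
  (forall x, x \in s -> f x != 0 -> exists2 i, D i & x = h i) ->
  \sum_(x <- s) f x = \sum_(i | D i) f (h i).
Proof.
move=> us hinj hs hf; set L := [seq h i | i <- enum D].
have uL : uniq L.
  by rewrite map_inj_in_uniq ?enum_uniq // => i j; rewrite !mem_enum; apply: hinj.
rewrite (bigID (mem L)) /= [X in _ + X]big1_seq ?addr0; last first.
  move=> x /andP[xL xs]; apply/eqP; apply: contraNT xL => /(hf _ xs) [i Di ->].
  by apply: map_f; rewrite mem_enum.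
rewrite -big_filter (perm_big L); last first.
  apply: uniq_perm => //; first exact: filter_uniq.
  move=> x; rewrite mem_filter; apply/andP/idP => [[]//|xL]; split => //.
  by case/mapP: xL => i; rewrite mem_enum => Di ->; apply: hs.
by rewrite big_map big_enum.
Qed.

Lemma sum_neq0 (T : eqType) (s : seq T) (F : T -> int) :
  \sum_(x <- s) F x != 0 -> exists2 x, x \in s & F x != 0.
Proof.
have [/hasP[x xs Fx] _|/hasPn F0] := boolP (has (fun x => F x != 0) s); first by exists x.
by rewrite big1_seq ?eqxx // => x /andP[_ /F0 /negPn /eqP].
Qed.

End IntSums.

(* [Eser d] is convertible to [Gser (fun k => k <= 1) d], and [Hser d] agrees
   pointwise with [Gser predT d]. *)
Definition Gser (q : pred nat) (c : nat) : ser :=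
  fun mu => ((valid mu && all (fun x => q (mu x)) (finsupp mu) && (mdeg mu == c) : nat)%:Z)%R.

Definition Gprod (q : pred nat) (s : seq (nat * nat)) : ser :=
  \big[sermul/ser1]_(p <- s) subst_pow p.2 (Gser q p.1).

Lemma Gprod_cons q p s : Gprod q (p :: s) = sermul (subst_pow p.2 (Gser q p.1)) (Gprod q s).
Proof. by rewrite /Gprod big_cons. Qed.

Lemma Hser_Gser d : Hser d =1 Gser predT d.
Proof.
move=> mu; rewrite /Gser /Hser.
by rewrite (_ : all _ _ = true) ?andbT //; apply/allP.
Qed.

Lemma Hlam_Gprod l : Hlam l =1 Gprod predT (enum_mset l).
Proof.
rewrite /Hlam /Gprod; elim/big_rec2: _ => // p f g _ Efg mu.
by apply: eq_bigr => al _; rewrite Efg /subst_pow Hser_Gser.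
Qed.

Section GprodCoef.
Local Open Scope ring_scope.
Variables (q : pred nat) (q0 : q 0%N).

Lemma Gprod_valid s mu : Gprod q s mu != 0 -> valid mu.
Proof.
elim: s mu => [|p s IH] mu.
  rewrite /Gprod big_nil /ser1; have [-> _|] // := eqVneq mu mset0.
  by apply/validP => x; rewrite mset0E eqxx.
rewrite Gprod_cons /sermul => /sum_neq0 [al]; rewrite mem_submsets => /msubsetP sub.
rewrite mulf_eq0 negb_or /subst_pow => /andP[].
case: ifP => [/allP dvd_al|]; last by rewrite eqxx.
rewrite /Gser; case: (boolP (valid _)) => [/validP v_al _|]; last by [].
move/IH/validP => v_rest; apply/validP => x mux.
have [al0|al_nz] := eqVneq (al x) 0%N.
  by apply: v_rest; rewrite msetE2 al0 subn0.
apply: v_al; rewrite mdivnE; have := dvd_al x; rewrite mem_finsupp => /(_ al_nz) dv.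
by apply: contra al_nz => /eqP H; rewrite -(divnK dv) H.
Qed.

Variables (X : seq var) (uX : uniq X)
  (vX : forall x, x \in X -> ((0 < x.1) && (0 < x.2))%N).

Lemma subst_pow_Gser_mon_of K n c (n0 : (0 < n)%N) (a : 'cV['I_K]_(size X)) :
  subst_pow n (Gser q c) (mon_of (fun k => a k ord0 * n)%N) =
  ((((\sum_k a k ord0 * fst_nth X k)%N == c) && [forall k, q (a k ord0)] : nat)%:Z).
Proof.
have supp_a : forall x, mon_of (fun k => val (a k ord0)) x != 0%N -> x \in X.
  by move=> x; apply: contraR => xX; rewrite mon_of_notin.
rewrite /subst_pow.
have -> : all (fun x => n %| mon_of (fun k => a k ord0 * n)%N x)%N
              (finsupp (mon_of (fun k => a k ord0 * n)%N)).
  apply/allP => x _; have [/pnthP [k ->]|xX] := boolP (x \in X).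
    by rewrite mon_of_pnth // dvdn_mull.
  by rewrite mon_of_notin.
have -> : mdivn n (mon_of (fun k => a k ord0 * n)%N) = mon_of (fun k => val (a k ord0)).
  apply/msetP => x; rewrite mdivnE; have [/pnthP [k ->]|xX] := boolP (x \in X).
    by rewrite !mon_of_pnth // mulnK.
  by rewrite !mon_of_notin // div0n.
rewrite /Gser; have -> : valid (mon_of (fun k => val (a k ord0))).
  by apply/validP => x /supp_a; apply: vX.
rewrite (mdeg_pnth uX supp_a) andTb andbC.
have -> : all (fun x => q (mon_of (fun k => val (a k ord0)) x))
             (finsupp (mon_of (fun k => val (a k ord0)))) = [forall k, q (a k ord0)].
  apply/allP/forallP => qa.
    move=> k; have [-> //|a_nz] := eqVneq (val (a k ord0)) 0%N.
    by have := qa (pnth X k); rewrite mem_finsupp !mon_of_pnth //; apply.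
  move=> x _; have [/pnthP [k ->]|xX] := boolP (x \in X); first by rewrite mon_of_pnth // qa.
  by rewrite mon_of_notin.
by rewrite (eq_bigr (fun k => a k ord0 * fst_nth X k)%N) // => k _; rewrite mon_of_pnth.
Qed.

Lemma submset_mon_of K n (mu al : mon) : (0 < n)%N -> al `<=` mu ->
  (forall x, mu x != 0%N -> x \in X) -> (forall x, mu x < K)%N -> (forall x, n %| al x)%N ->
  exists2 a : 'cV['I_K]_(size X), [forall k, a k ord0 * n <= mu (pnth X k)]%N
    & al = mon_of (fun k => a k ord0 * n)%N.
Proof.
move=> n_gt0 /msubsetP sub supp_mu mu_lt dvd_al.
have lt_K (k : 'I_(size X)) : (al (pnth X k) %/ n < K)%N.
  exact: leq_ltn_trans (leq_trans (leq_div _ _) (sub _)) (mu_lt _).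
exists (\col_k Ordinal (lt_K k)); first by apply/forallP => k; rewrite mxE /= divnK.
apply/msetP => x; have [/pnthP [k ->]|xX] := boolP (x \in X).
  by rewrite mon_of_pnth // mxE /= divnK.
rewrite mon_of_notin //; apply/eqP; rewrite -leqn0.
by apply: leq_trans (sub x) _; rewrite leqn0; apply: contraNT xX => /supp_mu.
Qed.

(* The coefficient of [mu] counts the arrangements of the exponent table of
   [mu] into [s]: the rows are the variables of [X], with [b = i] and
   [m = mu x_ij] for the row of [x_ij]. *)
Lemma Gprod_coef K s : (forall p, p \in s -> 0 < p.2)%N ->
  forall mu : mon, (forall x, mu x != 0%N -> x \in X) -> (forall x, mu x < K)%N ->
  Gprod q s mu =
  (arr_card q K (fst_nth X) (fun k => mu (pnth X k)) (fst_nth s) (snd_nth s))%:Z.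
Proof.
elim: s => [_|p s IH s_gt0] mu supp_mu mu_lt.
  rewrite /Gprod big_nil /ser1 arr_card_nil; congr (Posz (nat_of_bool _)).
  apply/eqP/forallP => [-> k|mu0]; first by rewrite mset0E.
  apply/msetP => x; rewrite mset0E; have [/pnthP [k ->]|xX] := boolP (x \in X).
    exact/eqP/mu0.
  by apply/eqP; apply: contraNT xX => /supp_mu.
have p0 : (0 < p.2)%N by apply: s_gt0; rewrite mem_head.
rewrite Gprod_cons /sermul (big_seq_reindex
  (h := fun a : 'cV['I_K]_(size X) => mon_of (fun k => a k ord0 * p.2)%N)
  (D := fun a => [forall k, a k ord0 * p.2 <= mu (pnth X k)]%N)); first last.
- move=> al; rewrite mem_submsets => sub.
  rewrite mulf_eq0 negb_or /subst_pow => /andP[].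
  case: ifP => [/allP dvd_al _ _|]; last by rewrite eqxx.
  apply: (submset_mon_of p0 sub supp_mu mu_lt) => x.
  by have [-> //|al_nz] := eqVneq (al x) 0%N; apply: dvd_al; rewrite mem_finsupp.
- move=> a Da; rewrite mem_submsets; apply/msubsetP => x.
  have [/pnthP [k ->]|xX] := boolP (x \in X); last by rewrite mon_of_notin.
  by rewrite mon_of_pnth //; apply: (forallP Da k).
- move=> a a' _ _ E; apply/matrixP => k j; rewrite (ord1 j); apply/val_inj.
  have := congr1 (fun m : mon => m (pnth X k)) E; rewrite !mon_of_pnth // => /eqP.
  by rewrite eqn_pmul2r // => /eqP.
- exact: undup_uniq.
rewrite arr_card_cons (big_morph Posz PoszD (erefl _)) [LHS]big_mkcond /=.
apply: eq_bigr => a _; case: ifP => Da; last by rewrite mul0n.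
rewrite subst_pow_Gser_mon_of // IH; first last.
- by move=> x; rewrite msetE2; apply: leq_ltn_trans (leq_subr _ _) (mu_lt x).
- by move=> x; rewrite msetE2 => H; apply: supp_mu; apply: contra H => /eqP ->.
- by move=> p' p's; apply: s_gt0; rewrite in_cons p's orbT.
rewrite (@eq_arr_card q K _ _ _ _ (fun k => mu (pnth X k) - a k ord0 * p.2)%N);
  last by move=> k; rewrite msetE2 mon_of_pnth.
by rewrite -PoszM.
Qed.

End GprodCoef.

Lemma tdeg_part_le (t : typ) y : (t y * (y.1 * y.2) <= tdeg t)%N.
Proof.
rewrite /tdeg sum_mset; have [yt|] := boolP (y \in finsupp t).
  by rewrite (big_rem _ yt) leq_addr.
by rewrite mem_finsupp negbK => /eqP ->.
Qed.

Lemma type_part_bounds (t : typ) y : is_type t -> t y != 0%N ->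
  [/\ 0 < y.1, 0 < y.2, y.1 <= tdeg t, y.2 <= tdeg t & t y <= tdeg t]%N.
Proof.
move=> /allP t_pos ty; have /andP[y1 y2] : ((0 < y.1) && (0 < y.2))%N.
  by apply: t_pos; rewrite -mset_neq0.
have ty_pos : (0 < t y)%N by rewrite lt0n.
split => //; apply: leq_trans (tdeg_part_le t y).
- exact: leq_trans (leq_pmulr _ y2) (leq_pmull _ ty_pos).
- exact: leq_trans (leq_pmull _ y1) (leq_pmull _ ty_pos).
- by rewrite leq_pmulr // muln_gt0 y1 y2.
Qed.

Lemma typ_of_ffE d (f : {ffun 'I_d * 'I_d -> 'I_d.+1}) y :
  typ_of_ff f y = (\sum_(x : 'I_d * 'I_d) f x * (((x.1 : nat).+1, (x.2 : nat).+1) == y))%N.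
Proof.
rewrite /typ_of_ff mset_seqE count_flatten -map_comp sumn_map big_map -enumT big_enum.
by apply: eq_bigr => x _; rewrite /= count_nseq mulnC.
Qed.

Lemma tdeg_types_of_deg d t : t \in types_of_deg d -> tdeg t = d.
Proof. by rewrite mem_undup => /mapP [f]; rewrite mem_filter => /andP[/eqP deg_f _] ->. Qed.

(* [t] is [typ_of_ff] of its own multiplicity table on [1, d]^2. *)
Lemma mem_types_of_deg t : is_type t -> t \in types_of_deg (tdeg t).
Proof.
move=> t_type; set d := tdeg t.
pose f : {ffun 'I_d * 'I_d -> 'I_d.+1} :=
  [ffun x : 'I_d * 'I_d => inord (t ((x.1 : nat).+1, (x.2 : nat).+1))].
have ft : typ_of_ff f = t.
  apply/msetP => y; rewrite typ_of_ffE.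
  have [ty0|ty] := eqVneq (t y) 0%N.
    rewrite ty0 big1 // => x _; case: eqP => [e|]; rewrite ?muln0 //.
    by rewrite ffunE /= e ty0 inordK.
  have [y1 y2 y1d y2d tyd] := type_part_bounds t_type ty.
  have i1 : (y.1.-1 < d)%N by rewrite prednK.
  have i2 : (y.2.-1 < d)%N by rewrite prednK.
  rewrite (bigD1 (Ordinal i1, Ordinal i2)) //= big1 ?addn0.
    rewrite !prednK // -surjective_pairing eqxx muln1 ffunE /= !prednK //.
    by rewrite -surjective_pairing inordK.
  move=> [x1 x2] /= hx; case: eqP => [e|]; rewrite ?muln0 //.
  by case/negP: hx; apply/eqP; congr (_, _); apply/val_inj => /=; rewrite -e.
rewrite -{1}ft mem_undup; apply/mapP; exists f => //.
by rewrite mem_filter mem_enum ft eqxx.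
Qed.

Lemma is_type_mtype (mu : mon) : valid mu -> is_type (mtype mu).
Proof.
move/validP => v_mu; apply/allP => p; rewrite /mtype (perm_mem (perm_eq_seq_mset _)).
case/mapP => x xs -> /=; have mux : mu x != 0%N by rewrite -mem_finsupp.
by case/andP: (v_mu x mux) => -> _; rewrite lt0n mux.
Qed.

Lemma tdeg_mtype (mu : mon) : tdeg (mtype mu) = mdeg mu.
Proof.
rewrite /tdeg /mtype (perm_big _ (perm_eq_seq_mset _)) big_map /mdeg sum_mset.
by apply: eq_bigr => x _; rewrite mulnC.
Qed.

Lemma is_type_ttr t : is_type t -> is_type (ttr t).
Proof.
move=> t_type; apply/allP => p; rewrite /ttr (perm_mem (perm_eq_seq_mset _)).
by case/mapP => x xt -> /=; case/andP: (allP t_type x xt) => -> ->.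
Qed.

Lemma snd_at_gt0 t : is_type t -> forall j, (0 < snd_at t j)%N.
Proof. by move=> t_type j; have /andP[] := allP t_type _ (mem_nth (0, 0)%N (ltn_ord j)). Qed.

Lemma snd_at_le_bound t j : (snd_at t j <= arr_bound t)%N.
Proof. by rewrite /arr_bound (big_rem _ (mem_nth (0, 0)%N (ltn_ord j))) leq_addr. Qed.

Lemma num_arrE t l :
  num_arr t l = arr_card predT (arr_bound t).+1 (fst_at t) (snd_at t) (fst_at l) (snd_at l).
Proof.
apply: eq_card => A; rewrite !inE.
by rewrite (_ : [forall i, _] = true) ?andbT //; apply/forallP => i; apply/forallP.
Qed.

Lemma num_arr01E t l : num_arr01 t l =
  arr_card (fun k => k <= 1)%N (arr_bound t).+1 (fst_at t) (snd_at t) (fst_at l) (snd_at l).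
Proof.
apply: eq_card => A; rewrite !inE /is01.
by congr (_ && _); apply: eq_forallb => i; apply: eq_forallb => j; rewrite mxE.
Qed.

Section SumTypes.
Local Open Scope ring_scope.

Lemma Gprod_sum_types (q : pred nat) (q0 : q 0%N) (l : typ) (NA : typ -> nat) :
  is_type l ->
  (forall t, NA t = arr_card q (arr_bound t).+1 (fst_at t) (snd_at t) (fst_at l) (snd_at l)) ->
  forall mu, Gprod q (enum_mset l) mu = sum_types (tdeg l) NA mu.
Proof.
move=> l_type NAE mu; rewrite /sum_types.
have [v_mu|] := boolP (valid mu); last first.
  move=> nv_mu; rewrite big1 => [|t _]; last by rewrite /Mser (negbTE nv_mu) mulr0.
  by apply/eqP; apply: contraNT nv_mu; apply: Gprod_valid.
pose X : seq var := finsupp mu.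
have supp_mu x : mu x != 0%N -> x \in X by rewrite -mem_finsupp.
have mu_lt x : (mu x < (arr_bound (mtype mu)).+1)%N.
  rewrite ltnS /arr_bound /mtype (perm_big _ (perm_eq_seq_mset _)) big_map.
  have [xX|xX] := boolP (x \in X); first by rewrite (big_rem _ xX) leq_addr.
  by rewrite (_ : mu x = 0%N) //; apply/eqP; apply: contraNT xX => /supp_mu.
rewrite (Gprod_coef q0 (fset_uniq _) _ _ supp_mu mu_lt); first last.
- by move=> p pl; case/andP: (allP l_type p pl).
- by move=> x; rewrite mem_finsupp; apply: (validP _ v_mu).
have ord_mu : ordering_of (fst_nth X) (fun k => mu (pnth X k)) (mtype mu).
  by rewrite /ordering_of /fst_nth /pnth (map_nth_enum_ord X (0, 0)%N (fun x => (x.1, mu x))).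
have [deg_mu|deg_mu] := eqVneq (mdeg mu) (tdeg l).
  have mem_mu : mtype mu \in types_of_deg (tdeg l).
    by rewrite -deg_mu -tdeg_mtype; apply/mem_types_of_deg/is_type_mtype.
  rewrite (bigD1_seq _ mem_mu (undup_uniq _)) /= big1 ?addr0; last first.
    by move=> t /negbTE; rewrite /Mser v_mu eq_sym => ->; rewrite mulr0.
  rewrite /Mser v_mu eqxx mulr1 NAE; congr Posz.
  exact: arr_card_ordering ord_mu (ordering_of_enum _).
rewrite big1_seq; last first.
  move=> t /andP[_ mem_t]; rewrite /Mser v_mu; case: eqP => [e|]; last by rewrite mulr0.
  by move: deg_mu; rewrite -(tdeg_types_of_deg mem_t) -e tdeg_mtype eqxx.
rewrite /arr_card; apply/eqP; rewrite eqz_nat cards_eq0; apply/eqP/setP => A.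
rewrite !inE; apply/negbTE/negP => /andP[/is_arr_weight weight _]; move: deg_mu.
rewrite (mdeg_pnth (fset_uniq _) supp_mu) (eq_bigr _ (fun k _ => mulnC _ _)).
by rewrite [tdeg l](big_nth (0, 0)%N) big_mkord -weight eqxx.
Qed.

End SumTypes.

(* Both counts are taken with a common entry bound, beyond which there are no
   arrangements, and then transposed. *)
Lemma arr_card_ttr (q : pred nat) t l : is_type t -> is_type l ->
  arr_card q (arr_bound t).+1 (fst_at t) (snd_at t) (fst_at l) (snd_at l) =
  arr_card q (arr_bound (ttr l)).+1 (fst_at (ttr l)) (snd_at (ttr l))
       (fst_at (ttr t)) (snd_at (ttr t)).
Proof.
move=> t_type l_type; set K := (arr_bound t + arr_bound (ttr l))%N.
rewrite (@arr_card_widen _ _ K) ?leq_addr //; last first.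
  move=> A arrA i j; apply: leq_trans (snd_at_le_bound i).
  exact: is_arr_entry_le arrA (snd_at_gt0 l_type) i j.
rewrite [RHS](@arr_card_widen _ _ K) ?leq_addl //; last first.
  move=> A arrA i j; apply: leq_trans (snd_at_le_bound i).
  exact: is_arr_entry_le arrA (snd_at_gt0 (is_type_ttr t_type)) i j.
rewrite arr_card_trmx.
rewrite (arr_card_ordering _ _ _ _ (ordering_of_ttr (ordering_of_enum l)) (ordering_of_enum _)).
exact: arr_card_ordering_col (ordering_of_ttr (ordering_of_enum t)) (ordering_of_enum _).
Qed.

Theorem theorem4 (l : typ) (Hl : is_type l) :
  (* H_lambda = sum_tau a(tau,lambda) M_tau, over types tau of degree d *)
  (forall mu : mon, Hlam l mu = sum_types (tdeg l) (fun t => num_arr t l) mu) /\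
  (* E^+_lambda = sum_tau e(tau,lambda) M_tau *)
  (forall mu : mon, Elam l mu = sum_types (tdeg l) (fun t => num_arr01 t l) mu) /\
  (* a(tau,lambda) = a(lambda^t,tau^t) and e(tau,lambda) = e(lambda^t,tau^t) *)
  (forall t : typ, is_type t -> tdeg t = tdeg l ->
     num_arr t l = num_arr (ttr l) (ttr t) /\
     num_arr01 t l = num_arr01 (ttr l) (ttr t)) /\
  (* realized by A |-> A^T, for any fixed orderings of tau and lambda (the  *)
  (* induced orderings of lambda^t = {(n_j,c_j)} and tau^t = {(m_i,b_i)})   *)
  (forall (t : typ), is_type t -> tdeg t = tdeg l ->
   forall (r s : nat) (b m : 'I_r -> nat) (c n : 'I_s -> nat),
     ordering_of b m t -> ordering_of c n l ->
     ordering_of n c (ttr l) /\ ordering_of m b (ttr t) /\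
     forall A : 'M[nat]_(r, s),
       is_arr b m c n A = is_arr n c m b A^T /\
       (is_arr b m c n A && is01 A) = (is_arr n c m b A^T && is01 A^T)).
Proof.
split.
  move=> mu; rewrite Hlam_Gprod.
  by apply: Gprod_sum_types => // t; rewrite num_arrE.
split.
  by apply: (@Gprod_sum_types (fun k => k <= 1)%N) => // t; rewrite num_arr01E.
split.
  by move=> t t_type _; rewrite !num_arrE !num_arr01E; split; apply: arr_card_ttr.
move=> t t_type _ r s b m c n ord_bm ord_cn.
split; first exact: ordering_of_ttr ord_cn.
split; first exact: ordering_of_ttr ord_bm.
by move=> A; rewrite -is_arr_trmx -is01_trmx.
Qed.
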